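(* Let $F$ be an Archimedean vector lattice. The order convergence on $F$ is idempotent: if $(f_{\alpha})_{\alpha\in A},(g_{\beta})_{\beta\in B}\subset F_{+}$ are nets with $g_{\beta}\xrightarrow{o} 0_{F}$ and $(f_{\alpha}-g_{\beta})^{+}\xrightarrow[\alpha]{o} 0_{F}$ for every $\beta\in B$, then $f_{\alpha}\xrightarrow{o} 0_{F}$.
   Context: A net $(f_\alpha)$ in $F$ order converges to $f$ (written $f_\alpha\xrightarrow{o}f$) if there exists $G\subset F$ with $\bigwedge G=0_F$ such that for every $g\in G$ there is $\alpha_0$ with $|f_\alpha-f|\le g$ for all $\alpha\ge\alpha_0$. *)

From HB Require Import structures.
From mathcomp Require Import all_boot all_order all_algebra.
From mathcomp Require Import reals.
Set Implicit Arguments. Unset Strict Implicit. Unset Printing Implicit Defensive.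
Import Order.TTheory GRing.Theory Num.Theory.
Local Open Scope ring_scope.

Record vlattice (R : realType) (F : lmodType R) := VLattice {
  vle : F -> F -> Prop;
  vle_refl : forall x, vle x x;
  vle_anti : forall x y, vle x y -> vle y x -> x = y;
  vle_trans : forall x y z, vle x y -> vle y z -> vle x z;
  vle_add : forall x y z, vle x y -> vle (x + z) (y + z);
  vle_scale : forall (a : R) x y, 0 <= a -> vle x y -> vle (a *: x) (a *: y);
  vsup : F -> F -> F;
  vsup_ubl : forall x y, vle x (vsup x y);
  vsup_ubr : forall x y, vle y (vsup x y);
  vsup_least : forall x y z, vle x z -> vle y z -> vle (vsup x y) z
}.

Section VL.
Variables (R : realType) (F : lmodType R) (L : vlattice F).

Definition vpos (x : F) : F := vsup L x 0.
Definition vabs (x : F) : F := vsup L x (- x).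

Definition archimedean_vl : Prop :=
  forall x y : F, vle L 0 x -> (forall n : nat, vle L (x *+ n) y) -> x = 0.

Definition is_vinf (G : F -> Prop) (m : F) : Prop :=
  (forall g, G g -> vle L m g) /\
  (forall h, (forall g, G g -> vle L h g) -> vle L h m).

Definition oconv (I : Type) (leI : I -> I -> Prop) (x : I -> F) (l : F) : Prop :=
  exists G : F -> Prop, is_vinf G 0 /\
    forall g, G g -> exists a0 : I, forall a, leI a0 a -> vle L (vabs (x a - l)) g.
End VL.

Definition directed (I : Type) (leI : I -> I -> Prop) : Prop :=
  (exists i : I, True) /\
  (forall i, leI i i) /\
  (forall i j k, leI i j -> leI j k -> leI i k) /\
  (forall i j, exists k, leI i k /\ leI j k).

(* The eventual upper bounds of |f_a| have infimum 0.  Let u lie below all of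
   them and let h be an eventual bound of |g_b|, say |g_b0| <= h.  Since
   f_a <= (f_a - g_b0)^+ + g_b0, every eventual bound k of (f_a - g_b0)^+
   gives the eventual bound k + h of f, so u - h <= k for all such k, whence
   u - h <= 0.  Thus u <= h for every h, and u <= 0. *)
From HB Require Import structures.
From mathcomp Require Import all_boot all_order all_algebra.
From mathcomp Require Import reals.
Import Order.TTheory GRing.Theory Num.Theory.
Local Open Scope ring_scope.

Section VectorLattice.
Context {R : realType} {F : lmodType R} {L : vlattice F}.

Lemma vleD (x y z w : F) : vle L x y -> vle L z w -> vle L (x + z) (y + w).
Proof.
move=> le_xy le_zw; apply: (vle_trans (vle_add z le_xy)).
by rewrite (addrC y z) (addrC y w); apply: vle_add.
Qed.

Lemma vle_subl_addr (x y z : F) : vle L (x - y) z <-> vle L x (z + y).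
Proof.
by split=> [/(vle_add y) | /(vle_add (- y))]; rewrite ?subrK ?addrK.
Qed.

Lemma vle_vpos (x : F) : vle L x (vpos L x).
Proof. exact: vsup_ubl. Qed.

Lemma vle_vabs (x : F) : vle L x (vabs L x).
Proof. exact: vsup_ubl. Qed.

Lemma vabs_ge0 (x : F) : vle L 0 (vabs L x).
Proof.
have ge0_2abs : vle L 0 (vabs L x *+ 2).
  by rewrite mulr2n -(subrr x); apply: vleD; [apply: vsup_ubl | apply: vsup_ubr].
have half_ge0 : (0 : R) <= 2^-1 by rewrite invr_ge0 ler0n.
have := vle_scale half_ge0 ge0_2abs.
by rewrite scaler0 -scaler_nat scalerA mulVf ?pnatr_eq0 ?scale1r.
Qed.

Lemma ger0_vabs (x : F) : vle L 0 x -> vabs L x = x.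
Proof.
move=> ge0_x; apply: vle_anti; last exact: vle_vabs.
apply: vsup_least; first exact: vle_refl.
apply: (vle_trans _ ge0_x).
by have := vle_add (- x) ge0_x; rewrite add0r subrr.
Qed.

Lemma vabs_le_vpos_subr (x y : F) :
  vle L 0 x -> vle L (vabs L x) (vabs L (vpos L (x - y)) + vabs L y).
Proof.
move=> ge0_x; rewrite ger0_vabs // -[x in vle _ x _](subrK y).
apply: vleD; last exact: vle_vabs.
exact: vle_trans (vle_vpos _) (vle_vabs _).
Qed.

Lemma vinf0_le_addr (H : F -> Prop) (u h : F) :
  is_vinf L H 0 -> (forall k, H k -> vle L u (k + h)) -> vle L u h.
Proof.
move=> [_ inf_H] le_u; rewrite -[h]add0r; apply/vle_subl_addr.
by apply: inf_H => k /le_u /vle_subl_addr.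
Qed.

Section OrderConvergence.
Context {I : Type} {leI : I -> I -> Prop}.
Hypothesis leI_refl : forall i, leI i i.

Definition eventual_bound (x : I -> F) (l u : F) : Prop :=
  exists i0, forall i, leI i0 i -> vle L (vabs L (x i - l)) u.

Lemma eventual_bound_ge0 (x : I -> F) (l u : F) :
  eventual_bound x l u -> vle L 0 u.
Proof. by move=> [i0 bound_u]; apply: vle_trans (vabs_ge0 _) (bound_u i0 _). Qed.

Lemma oconvP (x : I -> F) (l : F) :
  oconv L leI x l <-> is_vinf L (eventual_bound x l) 0.
Proof.
split=> [[G [[_ inf_G] bound_G]] | inf_bounds]; last by exists (eventual_bound x l).
split=> [u | h lb_h]; first exact: eventual_bound_ge0.
by apply: inf_G => u /bound_G /lb_h.
Qed.

End OrderConvergence.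
End VectorLattice.

Arguments eventual_bound {R F} L {I} leI x l u.

Theorem proposition4p5 (R : realType) (F : lmodType R) (L : vlattice F)
  (Harch : archimedean_vl L)
  (A : Type) (leA : A -> A -> Prop) (HA : directed leA)
  (B : Type) (leB : B -> B -> Prop) (HB : directed leB)
  (f : A -> F) (g : B -> F)
  (Hf : forall a, vle L 0 (f a)) (Hg : forall b, vle L 0 (g b))
  (Hgc : oconv L leB g 0)
  (Hfg : forall b, oconv L leA (fun a => vpos L (f a - g b)) 0) :
  oconv L leA f 0.
Proof.
have [_ [leA_refl _]] := HA; have [_ [leB_refl _]] := HB.
have /(oconvP leB_refl) [_ inf_bounds_g] := Hgc.
apply/(oconvP leA_refl); split=> [u | u lb_u]; first exact: eventual_bound_ge0.
apply: inf_bounds_g => h [b0 bound_g]; have gb0_le_h := bound_g b0 (leB_refl b0).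
have /(oconvP leA_refl) inf_bounds_fg := Hfg b0.
apply: (vinf0_le_addr _ _ _ inf_bounds_fg) => k [a0 bound_k].
apply: lb_u; exists a0 => a le_a0a; rewrite subr0.
apply: vle_trans (vabs_le_vpos_subr _ (g b0) (Hf a)) _.
apply: vleD; last by rewrite subr0 in gb0_le_h.
by have := bound_k a le_a0a; rewrite subr0.
Qed.
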